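(* For all $\varepsilon>0$ there exist $c,n_0\in\mathbb{N}$ such that for all primes $p\ge n_0$ the following holds. If $\delta\ge c/\log p$ (with $p^{\delta}$ an integer) and $r$ is a positive integer, then every proper $(r,p^{\delta})$-GAP $X\subseteq\mathbb{Z}_p$ is an $(r/p^{0.9\delta},\,0.1,\,\varepsilon)$-additive source of entropy rate $\delta r$ in $(\mathbb{Z}_p,+)$.
   Context: An $(r,s)$-GAP in $\mathbb{Z}_p$ is a set $\{b_0+\sum_{i=1}^r a_ib_i: a_i\in\mathbb{Z},\ 0\le a_i\le s-1\}$ with $b_0,\dots,b_r\in\mathbb{Z}_p$; proper means all $s^r$ sums are distinct. For $X\subseteq\mathbb{Z}_p$, $\mathrm{Sym}_{1-\alpha}(X)=\{g:|X\cap(X+g)|\ge(1-\alpha)|X|\}$, and $X$ is $(\alpha,\beta,\tau)$-additive if $|X+X|\le|X|^{1+\tau}$ and $|\mathrm{Sym}_{1-\alpha}(X)|\ge|X|^{\beta}$. Entropy rate $\delta'$ means $|X|\ge p^{\delta'}$. *)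

(* Stdlib Reals is imported first so that %R denotes MathComp's ring_scope;
   real-number arithmetic is written with explicit Stdlib function names. *)
From Stdlib Require Import Reals.
From mathcomp Require Import all_boot all_algebra.

Set Implicit Arguments.
Unset Strict Implicit.
Unset Printing Implicit Defensive.

Definition gap_elem (p r s : nat) (b0 : 'Z_p) (b : 'I_r -> 'Z_p)
  (a : {ffun 'I_r -> 'I_s}) : 'Z_p :=
  (b0 + \sum_(i < r) (b i *+ (a i : nat)))%R.

Definition GAP (p r s : nat) (b0 : 'Z_p) (b : 'I_r -> 'Z_p) : {set 'Z_p} :=
  [set gap_elem b0 b a | a : {ffun 'I_r -> 'I_s}].

Definition proper_GAP (p r s : nat) (b0 : 'Z_p) (b : 'I_r -> 'Z_p) : Prop :=
  injective (@gap_elem p r s b0 b).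

Definition sumset (p : nat) (X : {set 'Z_p}) : {set 'Z_p} :=
  [set (x + y)%R | x in X, y in X].

Definition translate (p : nat) (X : {set 'Z_p}) (g : 'Z_p) : {set 'Z_p} :=
  [set (x + g)%R | x in X].

Definition Sym (p : nat) (alpha : R) (X : {set 'Z_p}) : {set 'Z_p} :=
  [set g : 'Z_p |
    if Rle_dec (Rmult (Rminus (IZR 1) alpha) (INR #|X|))
               (INR #|X :&: translate X g|)
    then true else false].

Definition additive (p : nat) (X : {set 'Z_p}) (alpha beta tau : R) : Prop :=
  Rle (INR #|sumset X|) (Rpower (INR #|X|) (Rplus (IZR 1) tau)) /\
  Rle (Rpower (INR #|X|) beta) (INR #|Sym alpha X|).

Definition has_entropy_rate (p : nat) (X : {set 'Z_p}) (delta' : R) : Prop :=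
  Rle (Rpower (INR p) delta') (INR #|X|).

(* With s = p^delta the GAP X has s^r elements, and delta >= c / log p makes
   s^eps >= 2.  X + X lies in the (r, 2s)-GAP with base point 2 b0, so
   |X + X| <= (2s)^r <= |X|^(1+eps).  If g = sum a_i b_i with all a_i <= k,
   then X :&: (X + g) contains the (s - k)^r points of X whose coefficients,
   shifted by the a_i, stay below s; for k = floor(s^(1/10)) Bernoulli's
   inequality gives (s - k)^r >= (1 - r / s^(9/10)) s^r, so all these g lie in
   Sym, and they are (k + 1)^r >= |X|^(1/10) distinct points by properness. *)

From Pilot Require Import Defs.
From Stdlib Require Import Reals Lra ZArith.
From mathcomp Require Import all_boot all_algebra zify.
Import GRing.Theory.
(* mathcomp's [additive] shadows the one of Defs. *)
Import Pilot.Defs.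

Set Implicit Arguments.
Unset Strict Implicit.
Unset Printing Implicit Defensive.

Section RealBounds.
Local Open Scope R_scope.

Lemma INR_expn (m n : nat) : INR (m ^ n)%N = INR m ^ n.
Proof. by elim: n => // n IHn; rewrite expnS -multE mult_INR IHn. Qed.

Lemma Rpower_powl (x y : R) (n : nat) : 0 < x -> Rpower (x ^ n) y = Rpower x y ^ n.
Proof.
move=> x_gt0; rewrite -(Rpower_pow n _ x_gt0) -Rpower_pow; last exact: exp_pos.
by rewrite !Rpower_mult Rmult_comm.
Qed.

Lemma Bernoulli_pow (y : R) (n : nat) : 0 <= y <= 1 -> 1 - INR n * y <= (1 - y) ^ n.
Proof.
move=> y01; elim: n => [|n IHn]; first by rewrite /=; lra.
rewrite S_INR /=; have := pos_INR n.
have : (1 - INR n * y) * (1 - y) <= (1 - y) ^ n * (1 - y) by apply: Rmult_le_compat_r; lra.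
nra.
Qed.

Lemma nat_floor (x : R) : 0 <= x -> exists k : nat, INR k <= x < INR k + 1.
Proof.
move=> x_ge0; have [up_gt up_le] := archimed x.
have up_pos : Z.lt 0 (up x) by apply: lt_IZR; lra.
exists (Z.to_nat (Z.sub (up x) 1)); rewrite INR_IZR_INZ Z2Nat.id; last by lia.
rewrite minus_IZR; lra.
Qed.

Lemma Rpower_large (x delta eps c : R) :
  1 < x -> 0 < eps -> 1 < c * eps -> c / ln x <= delta ->
  1 < Rpower x delta /\ 2 <= Rpower x (delta * eps).
Proof.
move=> x_gt1 eps_gt0 ceps_gt1 le_c_delta.
have lnx_gt0 : 0 < ln x by rewrite -ln_1; apply: ln_increasing; lra.
have c_le : c <= delta * ln x.
  have := Rmult_le_compat_r _ _ _ (Rlt_le _ _ lnx_gt0) le_c_delta.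
  by rewrite /Rdiv Rmult_assoc Rinv_l; lra.
have c_gt0 : 0 < c by nra.
rewrite /Rpower; have := exp_ineq1_le (delta * ln x).
have := exp_ineq1_le (delta * eps * ln x); nra.
Qed.

Lemma pow_double_le_Rpower (S eps : R) (n : nat) :
  0 < S -> 2 <= Rpower S eps -> (S + S) ^ n <= Rpower (S ^ n) (1 + eps).
Proof.
move=> S_gt0 Seps_ge2; rewrite Rpower_powl // Rpower_plus Rpower_1 //.
apply: pow_incr; nra.
Qed.

Lemma pow_sub_small_ge (S K : R) (n : nat) :
  1 <= S -> 0 <= K <= Rpower S (1/10) ->
  (1 - INR n / Rpower S (9/10)) * S ^ n <= (S - K) ^ n.
Proof.
move=> S_ge1 [K_ge0 K_le].
set T := Rpower S (1/10) in K_le *; set N := Rpower S (9/10).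
have T_gt0 : 0 < T by apply: exp_pos.
have N_gt0 : 0 < N by apply: exp_pos.
have split_S : T * N = S.
  by rewrite -Rpower_plus; replace (1/10 + 9/10) with 1 by field; apply: Rpower_1; lra.
have T_le_S : T <= S by rewrite -[X in _ <= X](Rpower_1 S); [apply: Rle_Rpower|]; lra.
have S_inv_gt0 : 0 < / S by apply: Rinv_0_lt_compat; lra.
have y_le : K / S <= / N.
  have -> : / N = T / S by rewrite -split_S; field; lra.
  by apply: Rmult_le_compat_r; lra.
have y01 : 0 <= K / S <= 1.
  split; first by apply: Rmult_le_pos; lra.
  by rewrite -(Rinv_r S); [apply: Rmult_le_compat_r|]; lra.
have -> : S - K = S * (1 - K / S) by field; lra.
rewrite Rpow_mult_distr Rmult_comm; apply: Rmult_le_compat_l; first by apply: pow_le; lra.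
apply: Rle_trans _ _ _ (Bernoulli_pow n y01); have := pos_INR n.
rewrite /Rdiv; nra.
Qed.

Lemma Rpower_pow_le (S y K : R) (n : nat) :
  0 < S -> Rpower S y <= K -> Rpower (S ^ n) y <= K ^ n.
Proof.
move=> S_gt0 le_K; rewrite Rpower_powl //.
by apply: pow_incr; split => //; apply/Rlt_le/exp_pos.
Qed.

End RealBounds.

Section GAPCombinatorics.
Variables (p r : nat) (b : 'I_r -> 'Z_p).

Lemma gap_elem_add s t u b0 b0' (a : {ffun 'I_r -> 'I_s}) (a' : {ffun 'I_r -> 'I_t})
    (c : {ffun 'I_r -> 'I_u}) :
  (forall i, c i = a i + a' i :> nat) ->
  gap_elem (b0 + b0')%R b c = (gap_elem b0 b a + gap_elem b0' b a')%R.
Proof.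
move=> Dc; rewrite /gap_elem addrACA -big_split /=.
by congr (_ + _)%R; apply: eq_bigr => i _; rewrite Dc mulrnDr.
Qed.

Lemma gap_elem_eq s t b0 (a : {ffun 'I_r -> 'I_s}) (a' : {ffun 'I_r -> 'I_t}) :
  (forall i, a i = a' i :> nat) -> gap_elem b0 b a = gap_elem b0 b a'.
Proof. by move=> Da; congr (_ + _)%R; apply: eq_bigr => i _; rewrite Da. Qed.

Lemma gap_elem_base s b0 (a : {ffun 'I_r -> 'I_s}) :
  gap_elem b0 b a = (b0 + gap_elem 0 b a)%R.
Proof. by rewrite /gap_elem add0r. Qed.

Lemma card_GAP_le s b0 : #|GAP s b0 b| <= s ^ r.
Proof. by apply: leq_trans (leq_imset_card _ _) _; rewrite card_ffun !card_ord. Qed.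

Lemma card_GAP s b0 : proper_GAP s b0 b -> #|GAP s b0 b| = s ^ r.
Proof. by move=> inj_gap; rewrite card_imset // card_ffun !card_ord. Qed.

Lemma proper_GAP_widen s t b0 b0' :
  t <= s -> proper_GAP s b0 b -> proper_GAP t b0' b.
Proof.
move=> le_ts inj_gap a1 a2.
pose w (a : {ffun 'I_r -> 'I_t}) : {ffun 'I_r -> 'I_s} := [ffun i => widen_ord le_ts (a i)].
have Ew a : gap_elem b0 b (w a) = gap_elem b0 b a by apply: gap_elem_eq => i; rewrite ffunE.
rewrite gap_elem_base [RHS]gap_elem_base => /addrI E.
have Ew12 : w a1 = w a2.
  by apply: inj_gap; rewrite !Ew gap_elem_base E -gap_elem_base.
apply/ffunP => i; apply: val_inj.
by have := congr1 (fun f : {ffun 'I_r -> 'I_s} => val (f i)) Ew12; rewrite !ffunE.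
Qed.

Lemma sumset_GAP_sub s b0 : sumset (GAP s b0 b) \subset GAP (s + s) (b0 + b0)%R b.
Proof.
apply/subsetP => _ /imset2P [_ _ /imsetP [a _ ->] /imsetP [a' _ ->] ->].
have lt_sum i : a i + a' i < s + s by have := ltn_ord (a i); have := ltn_ord (a' i); lia.
apply/imsetP; exists [ffun i => Ordinal (lt_sum i)] => //.
by apply/esym/gap_elem_add => i; rewrite ffunE.
Qed.

Lemma card_sumset_GAP s b0 : #|sumset (GAP s b0 b)| <= (s + s) ^ r.
Proof. exact: leq_trans (subset_leq_card (sumset_GAP_sub s b0)) (card_GAP_le _ _). Qed.

Lemma card_GAP_meet_translate s k b0 (a : {ffun 'I_r -> 'I_k.+1}) :
  proper_GAP s b0 b ->
  (s - k) ^ r <= #|GAP s b0 b :&: translate (GAP s b0 b) (gap_elem 0%R b a)|.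
Proof.
move=> inj_gap.
have lt_shift (c : {ffun 'I_r -> 'I_(s - k)}) i : c i + a i < s.
  by have := ltn_ord (c i); have := ltn_ord (a i); lia.
pose sh c : {ffun 'I_r -> 'I_s} := [ffun i => Ordinal (lt_shift c i)].
pose wc c : {ffun 'I_r -> 'I_s} := [ffun i => widen_ord (leq_subr k s) (c i)].
have inj_sh : injective (fun c => gap_elem b0 b (sh c)).
  move=> c1 c2 /inj_gap E; apply/ffunP => i; apply: val_inj.
  by have := congr1 (fun f : {ffun 'I_r -> 'I_s} => val (f i)) E; rewrite !ffunE /=; lia.
have <- : #|[set gap_elem b0 b (sh c) | c : {ffun 'I_r -> 'I_(s - k)}]| = (s - k) ^ r.
  by rewrite card_imset // card_ffun !card_ord.
apply/subset_leq_card/subsetP => _ /imsetP [c _ ->]; rewrite inE; apply/andP; split.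
  by apply/imsetP; exists (sh c).
apply/imsetP; exists (gap_elem b0 b (wc c)); first by apply/imsetP; exists (wc c).
by rewrite -{1}[b0]addr0; apply: gap_elem_add => i; rewrite !ffunE.
Qed.

Lemma GAP_sub_Sym s k b0 alpha :
  proper_GAP s b0 b -> Rle (Rmult (Rminus 1 alpha) (INR (s ^ r))) (INR ((s - k) ^ r)) ->
  GAP k.+1 0%R b \subset Sym alpha (GAP s b0 b).
Proof.
move=> inj_gap le_frac; apply/subsetP => _ /imsetP [a _ ->].
rewrite inE (card_GAP inj_gap); case: Rle_dec => // -[]; apply: Rle_trans _ _ _ le_frac _.
exact/le_INR/leP/card_GAP_meet_translate.
Qed.

Lemma card_Sym_GAP s k b0 alpha :
  k < s -> proper_GAP s b0 b ->
  Rle (Rmult (Rminus 1 alpha) (INR (s ^ r))) (INR ((s - k) ^ r)) ->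
  k.+1 ^ r <= #|Sym alpha (GAP s b0 b)|.
Proof.
move=> lt_ks inj_gap le_frac.
rewrite -(card_GAP (proper_GAP_widen (b0' := 0%R) lt_ks inj_gap)).
exact/subset_leq_card/GAP_sub_Sym.
Qed.

End GAPCombinatorics.

Theorem lemma3p6 :
  forall eps : R, Rlt (IZR 0) eps ->
  exists c n0 : nat,
  forall p : nat, prime p -> (n0 <= p)%N ->
  forall (delta : R) (s : nat),
    Rle (Rdiv (INR c) (ln (INR p))) delta ->
    Rpower (INR p) delta = INR s ->
  forall r : nat, (0 < r)%N ->
  forall (b0 : 'Z_p) (b : 'I_r -> 'Z_p),
    @proper_GAP p r s b0 b ->
    additive (@GAP p r s b0 b)
             (Rdiv (INR r) (Rpower (INR p) (Rmult (Rdiv (IZR 9) (IZR 10)) delta)))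
             (Rdiv (IZR 1) (IZR 10)) eps /\
    has_entropy_rate (@GAP p r s b0 b) (Rmult delta (INR r)).
Proof.
move=> eps eps_gt0; have [c ceps_gt1] := INR_archimed eps 1 eps_gt0.
exists c, 2 => p _ p_ge2 delta s le_c_delta Ds r _ b0 b inj_gap.
have p_gt1 : Rlt 1 (INR p) by apply: (lt_INR 1); apply/ltP.
have [s_gt1 s_eps] := Rpower_large p_gt1 eps_gt0 ceps_gt1 le_c_delta.
rewrite -Rpower_mult Ds in s_eps; rewrite Ds in s_gt1.
have [k [k_le k_gt]] := nat_floor (Rlt_le 0 (Rpower (INR s) (1/10)) (exp_pos _)).
have lt_ks : (k < s)%N.
  apply/ltP/INR_lt; apply: Rle_lt_trans k_le _.
  by rewrite -[X in Rlt _ X](Rpower_1 (INR s)); [apply: Rpower_lt|]; lra.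
have Dalpha : Rpower (INR p) (9/10 * delta) = Rpower (INR s) (9/10).
  by rewrite -Ds Rpower_mult Rmult_comm.
rewrite /additive /has_entropy_rate (card_GAP inj_gap) Dalpha; split; [split|].
- apply: Rle_trans _ _ _ (le_INR _ _ (leP (card_sumset_GAP b s b0))) _.
  rewrite !INR_expn -plusE plus_INR; apply: pow_double_le_Rpower; lra.
- apply: Rle_trans _ _ _ _ (le_INR _ _ (leP (card_Sym_GAP lt_ks inj_gap _))).
    by rewrite INR_expn INR_expn S_INR; apply: Rpower_pow_le; lra.
  rewrite !INR_expn minus_INR; last exact/leP/ltnW.
  by apply: pow_sub_small_ge; [lra | split; [apply: pos_INR | lra]].
- by rewrite INR_expn -Rpower_mult Ds Rpower_pow; [apply: Rle_refl | lra].
Qed.
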